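(* Let $1\le p<\infty$ and consider $\ell_p$ as a Banach algebra under coordinatewise multiplication. Let $w=(w(n))_{n\ge2}$ be a bounded sequence of non-zero complex numbers and $B_w(x(1),x(2),x(3),\ldots)=(w(2)x(2),w(3)x(3),w(4)x(4),\ldots)$ the weighted backward shift on $\ell_p$. Assume that $|w(n)|\ge1$ for all $n\ge2$ and that, for some integer $m\ge2$, $\sum_{n=2}^\infty\frac{1}{|w(2)w(3)\cdots w(n)|^{p/m}}=\infty$. Then for any $x\in\ell_p$, $x^m$ is not frequently hypercyclic for $B_w$. In particular, $B_w$ does not have any frequently hypercyclic algebra.
   Context: A vector $x$ is frequently hypercyclic for $T$ if for every non-empty open $U$ the set $\{n\in\mathbb N_0:T^nx\in U\}$ has positive lower density $\liminf_{N\to\infty}\frac{\mathrm{card}(A\cap[0,N])}{N+1}$. A frequently hypercyclic algebra is a subalgebra $\ne\{0\}$ all of whose non-zero elements are frequently hypercyclic. Powers are coordinatewise. *)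

From HB Require Import structures.
From mathcomp Require Import all_boot all_order all_algebra.
From mathcomp Require Import all_classical all_reals all_analysis.
From mathcomp Require Import complex.
Set Implicit Arguments. Unset Strict Implicit. Unset Printing Implicit Defensive.
Import Order.TTheory GRing.Theory Num.Theory.
Local Open Scope classical_set_scope.
Local Open Scope ring_scope.

Section Defs.
Variable R : realType.

Definition cmod (z : R[i]) : R := ComplexField.Normc.normc z.

(* Sequences x : nat -> R[i] are indexed from 0: x k is the paper's x(k+1). *)

Definition lpsum (p : R) (x : nat -> R[i]) : \bar R :=
  (\sum_(0 <= k <oo) ((cmod (x k)) `^ p)%:E)%E.

Definition in_lp (p : R) (x : nat -> R[i]) : Prop := (lpsum p x < +oo)%E.

(* the l_p norm (meaningful for x in l_p) *)
Definition lpnorm (p : R) (x : nat -> R[i]) : R := (fine (lpsum p x)) `^ p^-1.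

(* Weighted backward shift; w is indexed as in the paper (w n, n >= 2):
   B_w(x(1),x(2),...) = (w(2)x(2), w(3)x(3), ...), i.e. with 0-based x,
   (B_w x) k = w (k+2) * x (k+1). *)
Definition Bw (w : nat -> R[i]) (x : nat -> R[i]) : nat -> R[i] :=
  fun k => w k.+2 * x k.+1.

Definition lower_density (A : set nat) : \bar R :=
  limn_einf (fun N : nat =>
    ((\sum_(n < N.+1) (\1_A n : R)) / N.+1%:R)%:E).

(* x is frequently hypercyclic for T on l_p: for every non-empty open set U
   of l_p (equivalently, every open ball B(y, e) with y in l_p, e > 0),
   {n | T^n x ∈ U} has positive lower density. *)
Definition freq_hypercyclic (p : R) (T : (nat -> R[i]) -> (nat -> R[i]))
    (x : nat -> R[i]) : Prop :=
  in_lp p x /\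
  forall y : nat -> R[i], in_lp p y -> forall e : R, 0 < e ->
    (0 < lower_density [set n | (lpnorm p (fun k => iter n T x k - y k) < e)%R])%E.

Definition lp_subalgebra (p : R) (A : set (nat -> R[i])) : Prop :=
  [/\ A `<=` in_lp p,
      A (fun _ => 0),
      (forall x y, A x -> A y -> A (fun k => x k + y k)),
      (forall (c : R[i]) x, A x -> A (fun k => c * x k)) &
      (forall x y, A x -> A y -> A (fun k => x k * y k))].

Definition freq_hypercyclic_algebra (p : R) (T : (nat -> R[i]) -> (nat -> R[i]))
    (A : set (nat -> R[i])) : Prop :=
  [/\ lp_subalgebra p A, A <> [set fun _ => 0] &
      forall x, A x -> x <> (fun _ => 0) -> freq_hypercyclic p T x].

End Defs.

(* If x^m were frequently hypercyclic, the set A of those n for which B_w^n x^m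
   lies within 1/2 of e_1 would have positive lower density.  Reading off the
   first coordinate, |w(2)...w(n+1)| |x(n+1)|^m > 1/2 for n in A, so |x(n+1)|^p
   is at least a fixed multiple of a_n = |w(2)...w(n+1)|^(-p/m).  As |w| >= 1
   the a_n decrease, and by Abel summation a set of positive lower density
   collects a divergent part of any divergent nonincreasing series; hence
   sum |x(n)|^p diverges, contradicting x in l_p.  A frequently hypercyclic
   algebra would contain x^m for some nonzero x, which is impossible. *)

From HB Require Import structures.
From mathcomp Require Import all_boot all_order all_algebra.
From mathcomp Require Import all_classical all_reals all_analysis.
From mathcomp Require Import complex.
From mathcomp Require Import ring lra.
Set Implicit Arguments. Unset Strict Implicit. Unset Printing Implicit Defensive.
Import Order.TTheory GRing.Theory Num.Theory.
Local Open Scope classical_set_scope.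
Local Open Scope ring_scope.

Section cmod.
Variable R : realType.
Implicit Types z : R[i].

Lemma normc_cmod z : `|z| = (cmod z)%:C%C.
Proof. by case: z. Qed.

Lemma cmod_ge0 z : 0 <= cmod z.
Proof. by case: z => a b; exact: sqrtr_ge0. Qed.

Lemma cmod0 : cmod (0 : R[i]) = 0.
Proof. by apply: complexI; rewrite -normc_cmod normr0. Qed.

Lemma cmod1 : cmod (1 : R[i]) = 1.
Proof. by apply: complexI; rewrite rmorph1 -normc_cmod normr1. Qed.

Lemma cmodM z1 z2 : cmod (z1 * z2) = cmod z1 * cmod z2.
Proof. by apply: complexI; rewrite rmorphM /= -!normc_cmod normrM. Qed.

Lemma cmodX z n : cmod (z ^+ n) = cmod z ^+ n.
Proof. by apply: complexI; rewrite rmorphXn /= -!normc_cmod normrX. Qed.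

Lemma cmod_prod (I : Type) (r : seq I) (P : pred I) (F : I -> R[i]) :
  cmod (\prod_(i <- r | P i) F i) = \prod_(i <- r | P i) cmod (F i).
Proof.
apply: complexI; rewrite rmorph_prod /= -normc_cmod normr_prod.
by under eq_bigr do rewrite normc_cmod.
Qed.

Lemma cmodN z : cmod (- z) = cmod z.
Proof. by apply: complexI; rewrite -!normc_cmod normrN. Qed.

Lemma cmod_lerB z1 z2 : cmod z1 - cmod z2 <= cmod (z1 - z2).
Proof. by rewrite -lecR rmorphB /= -!normc_cmod lerB_dist. Qed.

End cmod.

Lemma powR_pinv (R : realType) (a p : R) : 0 <= a -> 0 < p -> (a `^ p) `^ p^-1 = a.
Proof. by move=> a0 p0; rewrite -powRrM divff ?gt_eqF // powRr1. Qed.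

Lemma powR_exprn (R : realType) (t p : R) m : (0 < m)%N -> 0 <= t ->
  t `^ p = (t ^+ m) `^ (p / m%:R).
Proof.
move=> m_gt0 t_ge0.
by rewrite -powR_mulrn // -powRrM mulrC divfK // pnatr_eq0 -lt0n.
Qed.

Section nonnegative_series.
Variable R : realType.
Local Open Scope ereal_scope.

Lemma nneseries_pinftyP (f : nat -> R) : (forall k, 0 <= f k)%R ->
  \sum_(0 <= k <oo) (f k)%:E = +oo <->
  forall B : R, exists N, (B < \sum_(k < N) f k)%R.
Proof.
move=> f0; split=> [S_oo B | S_unbounded].
  apply/not_existsP => S_le; suff : \sum_(0 <= k <oo) (f k)%:E <= B%:E by rewrite S_oo.
  apply: lime_le; first by apply: is_cvg_nneseries => n _ _; rewrite lee_fin.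
  by apply: nearW => N; rewrite /= sumEFin lee_fin big_mkord leNgt; apply/negP/S_le.
have S_ge0 : 0 <= \sum_(0 <= k <oo) (f k)%:E.
  by apply: nneseries_ge0 => n _ _; rewrite lee_fin.
case S_eq : (\sum_(0 <= k <oo) (f k)%:E) S_ge0 => [s | // | //] _.
have [N sN] := S_unbounded s.
have := @nneseries_lim_ge R (fun k => (f k)%:E) xpredT 0 N (fun n _ _ => f0 n).
by rewrite S_eq sumEFin lee_fin big_mkord leNgt sN.
Qed.

Lemma nneseriesS (f : nat -> \bar R) : (forall n, 0 <= f n) ->
  \sum_(0 <= n <oo) f n = f 0%N + \sum_(0 <= n <oo) f n.+1.
Proof.
move=> f0; rewrite nneseries_recl // -(nneseries_addn 1) //.
by under [in RHS]eq_eseriesr do rewrite -addn1.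
Qed.

Lemma nneseries_ge_term (f : nat -> \bar R) k : (forall n, 0 <= f n) ->
  f k <= \sum_(0 <= n <oo) f n.
Proof.
move=> f0; rewrite (@nneseriesD1 R f k xpredT) // leeDl //.
by apply: nneseries_ge0 => n _ _; exact: f0.
Qed.

End nonnegative_series.

Definition e0 {R : realType} : nat -> R[i] := fun k => if k is 0 then 1 else 0.

Section lp.
Variables (R : realType) (p : R).
Implicit Types x y : nat -> R[i].

Lemma lpsum_recl x :
  lpsum p x = ((cmod (x 0%N)) `^ p)%:E + lpsum p (fun k => x k.+1).
Proof. by rewrite /lpsum nneseriesS // => k; rewrite lee_fin powR_ge0. Qed.

Lemma in_lp_tail x : in_lp p x <-> in_lp p (fun k => x k.+1).
Proof.
rewrite /in_lp lpsum_recl; split => [|tail_fin].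
  by apply: le_lt_trans; rewrite leeDr // lee_fin powR_ge0.
by rewrite lte_add_pinfty // ltry.
Qed.

Lemma in_lp_subr_e0 x : in_lp p (fun k => x k - e0 k) <-> in_lp p x.
Proof.
rewrite in_lp_tail [in X in _ <-> X]in_lp_tail.
by under eq_fun do rewrite subr0.
Qed.

Hypothesis p_gt0 : 0 < p.

Lemma in_lp_e0 : in_lp p e0.
Proof.
rewrite in_lp_tail /in_lp /lpsum eseries0 ?ltry // => k _ _.
by rewrite cmod0 powR0 // gt_eqF.
Qed.

(* Without [in_lp p x] this fails: [lpnorm] of a sequence outside l_p is the junk value 0. *)
Lemma cmod_le_lpnorm x k : in_lp p x -> cmod (x k) <= lpnorm p x.
Proof.
move=> x_lp; have S_ge0 : (0 <= lpsum p x)%E.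
  by apply: nneseries_ge0 => n _ _; rewrite lee_fin powR_ge0.
have xk_le : (cmod (x k)) `^ p <= fine (lpsum p x).
  rewrite -lee_fin fineK ?ge0_fin_numE //.
  by rewrite /lpsum; apply: nneseries_ge_term => n; rewrite lee_fin powR_ge0.
rewrite /lpnorm -[cmod (x k)](@powR_pinv _ _ p) ?cmod_ge0 //.
apply: ge0_ler_powR => //; first by rewrite invr_ge0 ltW.
  by rewrite nnegrE powR_ge0.
by rewrite nnegrE (le_trans _ xk_le) // powR_ge0.
Qed.

End lp.

Section lower_density.
Variable R : realType.
Implicit Types (A : set nat) (b : nat -> R).

Local Notation count A N := (\sum_(n < N) (\1_A n : R)).

Lemma lower_density_gt0 A : (0 < lower_density R A)%E ->
  exists2 d : R, 0 < d &
    exists N0, forall N, (N0 <= N)%N -> d * N%:R <= count A N.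
Proof.
rewrite /lower_density limn_einf_lim; set u := (fun N : nat => _).
rewrite (cvg_lim _ (@cvg_einfs_sup R u)) // => /ereal_sup_gt [_ [N0 _ <-]].
have u_ge N : (N0 <= N)%N -> (einfs u N0 <= u N)%E.
  by move=> N0N; apply: ereal_inf_lbound; exists N.
case: (einfs u N0) u_ge => [d | | //] u_ge d_gt0; last first.
  by have := u_ge N0 (leqnn _); rewrite /u leNgt ltey.
exists d; first by rewrite -lte_fin.
exists N0.+1 => -[//| N] N0N.
by rewrite -ler_pdivlMr ?ltr0Sn // -lee_fin (u_ge N).
Qed.

Lemma sum_indic_mul_ge A b (d : R) N0 :
  (forall n, 0 <= b n) -> (forall n, b n.+1 <= b n) ->
  (forall N, (N0 <= N)%N -> d * N%:R <= count A N) ->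
  exists c, forall N, (N0 <= N)%N ->
    c + d * \sum_(n < N) b n <= \sum_(n < N) \1_A n * b n.
Proof.
move=> b_ge0 b_noninc count_ge.
pose S N := \sum_(n < N) \1_A n * b n.
pose T N := \sum_(n < N) b n.
(* Abel summation: F is S minus its main term d * T, and it is nondecreasing
   from N0 on because count A N >= d * N there. *)
pose F N := S N - count A N * b N - d * (T N - N%:R * b N).
have F_le N : (N0 <= N)%N -> F N <= F N.+1.
  move=> N0N.
  have -> : F N.+1 = F N + (count A N.+1 - d * N.+1%:R) * (b N - b N.+1).
    by rewrite /F /S /T !big_ord_recr /= -natr1; ring.
  by rewrite lerDl mulr_ge0 // subr_ge0 ?count_ge ?b_noninc // (leqW N0N).
have F_mono N : (N0 <= N)%N -> F N0 <= F N.
  elim: N => [|N IH]; first by rewrite leqn0 => /eqP ->.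
  rewrite leq_eqVlt => /orP[/eqP -> // | N0N].
  exact: le_trans (IH N0N) (F_le N N0N).
exists (F N0) => N N0N; rewrite -/(S N) -/(T N).
have -> : S N = F N + (count A N - d * N%:R) * b N + d * T N by rewrite /F; ring.
rewrite lerD2r (le_trans (F_mono N N0N)) // lerDl mulr_ge0 // subr_ge0.
exact: count_ge.
Qed.

Lemma lower_density_gt0_nneseries A b : (0 < lower_density R A)%E ->
  (forall n, 0 <= b n) -> (forall n, b n.+1 <= b n) ->
  (\sum_(0 <= n <oo) (b n)%:E = +oo)%E ->
  (\sum_(0 <= n <oo) (\1_A n * b n)%:E = +oo)%E.
Proof.
move=> /lower_density_gt0 [d d_gt0 [N0 count_ge]] b_ge0 b_noninc.
move=> /(nneseries_pinftyP b_ge0) T_unbounded.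
apply/nneseries_pinftyP => [n | B]; first by rewrite mulr_ge0.
have [c S_ge] := sum_indic_mul_ge b_ge0 b_noninc count_ge.
have [N TN] := T_unbounded ((B - c) / d).
exists (N + N0)%N; apply: lt_le_trans (S_ge _ (leq_addl _ _)).
have T_le : \sum_(n < N) b n <= \sum_(n < N + N0) b n.
  by rewrite big_split_ord lerDl sumr_ge0.
rewrite ltr_pdivrMr // in TN.
have := ler_wpM2l (ltW d_gt0) T_le; rewrite mulrC in TN; lra.
Qed.

End lower_density.

Section weighted_backward_shift.
Variables (R : realType) (w : nat -> R[i]).
Implicit Types (p : R) (x y : nat -> R[i]).

Lemma iter_Bw0 n y : iter n (Bw w) y 0%N = (\prod_(2 <= j < n.+2) w j) * y n.
Proof.
elim: n y => [|n IH] y; first by rewrite big_geq ?mul1r.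
by rewrite iterSr IH [in RHS]big_nat_recr //= mulrA.
Qed.

Definition weight_prod n := \prod_(2 <= j < n.+2) cmod (w j).

Lemma weight_prodS n : weight_prod n.+1 = weight_prod n * cmod (w n.+2).
Proof. by rewrite /weight_prod big_nat_recr. Qed.

Variable M : R.
Hypothesis w_le : forall n, (2 <= n)%N -> cmod (w n) <= M.

Lemma in_lp_Bw p y : 0 <= p -> in_lp p y -> in_lp p (Bw w y).
Proof.
move=> p_ge0; rewrite in_lp_tail /in_lp => tail_lp.
have M_ge0 : 0 <= M by apply: le_trans (w_le (leqnn 2)); exact: cmod_ge0.
apply: (@le_lt_trans _ _ ((M `^ p)%:E * lpsum p (fun k => y k.+1))%E).
  rewrite /lpsum -nneseriesZl => [|k _]; last by rewrite lee_fin powR_ge0.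
  apply: lee_nneseries => [k _ _ | k _]; first by rewrite lee_fin powR_ge0.
  rewrite /Bw -EFinM lee_fin cmodM -powRM ?cmod_ge0 //.
  by apply: ge0_ler_powR; rewrite ?nnegrE ?mulr_ge0 ?cmod_ge0 ?ler_wpM2r ?cmod_ge0 ?w_le.
by rewrite lte_mul_pinfty ?lee_fin ?powR_ge0.
Qed.

Lemma in_lp_iter_Bw p n y : 0 <= p -> in_lp p y -> in_lp p (iter n (Bw w) y).
Proof. by move=> p_ge0 y_lp; elim: n => [|n IH] //=; apply: in_lp_Bw. Qed.

Lemma iter_Bw_near_e0 p n y : 0 < p ->
    in_lp p (fun k => iter n (Bw w) y k - e0 k) ->
    lpnorm p (fun k => iter n (Bw w) y k - e0 k) < 2^-1 ->
  2^-1 < weight_prod n * cmod (y n).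
Proof.
move=> p_gt0 /(cmod_le_lpnorm p_gt0 0%N) near_le /(le_lt_trans near_le).
have := cmod_lerB 1 (iter n (Bw w) y 0%N).
rewrite -[cmod (1 - _)]cmodN opprB cmod1 /e0 iter_Bw0 cmodM cmod_prod.
by rewrite -/(weight_prod n); lra.
Qed.

Hypothesis w_ge1 : forall n, (2 <= n)%N -> 1 <= cmod (w n).

Lemma weight_prod_ge1 n : 1 <= weight_prod n.
Proof.
elim: n => [|n IH]; first by rewrite /weight_prod big_geq.
by rewrite weight_prodS mulr_ege1 ?w_ge1.
Qed.

Lemma weight_prod_le n : weight_prod n <= weight_prod n.+1.
Proof.
by rewrite weight_prodS ler_peMr ?w_ge1 // (le_trans ler01) ?weight_prod_ge1.
Qed.

Lemma Bw_exprn_not_freq_hypercyclic p m x : 0 < p -> (0 < m)%N ->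
  (\sum_(0 <= n <oo) ((weight_prod n `^ (p / m%:R))^-1)%:E = +oo)%E ->
  in_lp p x -> ~ freq_hypercyclic p (Bw w) (fun k => x k ^+ m).
Proof.
move=> p_gt0 m_gt0 a_div x_lp [xm_lp /(_ e0 (in_lp_e0 p_gt0) 2^-1)].
rewrite invr_gt0 ltr0n => /(_ erefl); set A := [set n | _] => A_dense.
set q := p / m%:R; have q_ge0 : 0 <= q by rewrite divr_ge0 ?ler0n ?ltW.
pose a n := (weight_prod n `^ q)^-1.
have W_gt0 n : 0 < weight_prod n by rewrite (lt_le_trans ltr01) ?weight_prod_ge1.
have Wq_gt0 n : 0 < weight_prod n `^ q by rewrite powR_gt0.
have a_ge0 n : 0 <= a n by rewrite invr_ge0 ltW.
have a_noninc n : a n.+1 <= a n.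
  by rewrite lef_pV2 ?posrE // ge0_ler_powR ?nnegrE ?weight_prod_le // ltW.
pose K := 2^-1 `^ q; have K_gt0 : 0 < K by rewrite powR_gt0.
have a_le n : n \in A -> a n <= K^-1 * cmod (x n) `^ p.
  move=> /set_mem /iter_Bw_near_e0 -/(_ p_gt0) near_e0.
  have {near_e0} : 2^-1 < weight_prod n * cmod (x n ^+ m).
    apply: near_e0; apply/in_lp_subr_e0/in_lp_iter_Bw => //; exact: ltW.
  rewrite cmodX => near_e0.
  rewrite ler_pdivlMl // ler_pdivrMr // (powR_exprn p m_gt0) ?cmod_ge0 //.
  rewrite -powRM ?exprn_ge0 ?cmod_ge0 ?(ltW (W_gt0 n)) //.
  apply: ge0_ler_powR; rewrite // ?nnegrE ?mulr_ge0 ?exprn_ge0 ?cmod_ge0 //.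
  - exact: ltW.
  - by rewrite mulrC ltW.
suff : (\sum_(0 <= n <oo) (\1_A n * a n)%:E < +oo)%E.
  by rewrite (lower_density_gt0_nneseries A_dense a_ge0 a_noninc a_div).
apply: (@le_lt_trans _ _ ((K^-1)%:E * lpsum p x)%E); last first.
  by rewrite lte_mul_pinfty ?lee_fin ?invr_ge0 ?ltW.
rewrite /lpsum -nneseriesZl => [|k _]; last by rewrite lee_fin powR_ge0.
apply: lee_nneseries => [n _ _ | n _]; first by rewrite lee_fin mulr_ge0.
rewrite -EFinM lee_fin indicE; case: (boolP (n \in A)) => [/a_le | _].
  by rewrite mul1r.
by rewrite mul0r mulr_ge0 ?powR_ge0 ?invr_ge0 ?ltW.
Qed.

End weighted_backward_shift.

Section lp_subalgebra.
Variables (R : realType) (p : R) (A : set (nat -> R[i])).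
Hypothesis A_alg : lp_subalgebra p A.

Lemma lp_subalgebra_exprn x n : (0 < n)%N -> A x -> A (fun k => x k ^+ n).
Proof.
case: A_alg => _ _ _ _ A_mul; case: n => // n _ Ax; elim: n => [|n IH].
  by under eq_fun do rewrite expr1.
by under eq_fun do rewrite exprS; exact: A_mul.
Qed.

Lemma lp_subalgebra_nonzero : A <> [set fun _ => 0] ->
  exists2 x, A x & x <> (fun _ => 0).
Proof.
case: A_alg => _ A0 _ _ _ A_ne; apply: contrapT => /forall2NP no_nonzero.
apply: A_ne; apply/seteqP; split => [x Ax | _ ->] //=.
by case: (no_nonzero x) => // /contrapT.
Qed.

End lp_subalgebra.

Lemma exprn_seq_neq0 (R : realType) (x : nat -> R[i]) m :
  x <> (fun _ => 0) -> (fun k => x k ^+ m) <> (fun _ => 0).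
Proof.
move=> x_ne0 xm_eq0; apply: x_ne0; apply/funext => k.
by move/(congr1 (@^~ k))/eqP: xm_eq0; rewrite expf_eq0 => /andP[_ /eqP].
Qed.

Theorem proposition3p2 (R : realType) (p : R) (w : nat -> R[i]) (m : nat) :
  1 <= p ->
  (exists M : R, forall n : nat, (2 <= n)%N -> cmod (w n) <= M) ->
  (forall n : nat, (2 <= n)%N -> w n != 0) ->
  (forall n : nat, (2 <= n)%N -> 1 <= cmod (w n)) ->
  (2 <= m)%N ->
  (\sum_(0 <= k <oo)
     (((\prod_(2 <= j < k.+3) cmod (w j)) `^ (p / m%:R))^-1)%:E = +oo)%E ->
  (forall x : nat -> R[i], in_lp p x ->
     ~ freq_hypercyclic p (Bw w) (fun k => x k ^+ m)) /\
  ~ (exists A : set (nat -> R[i]), freq_hypercyclic_algebra p (Bw w) A).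
Proof.
move=> p_ge1 [M w_le] _ w_ge1 m_ge2 tail_div.
have p_gt0 : 0 < p by apply: lt_le_trans p_ge1.
have m_gt0 : (0 < m)%N by apply: leq_trans m_ge2.
have not_fhc x : in_lp p x -> ~ freq_hypercyclic p (Bw w) (fun k => x k ^+ m).
  apply: (Bw_exprn_not_freq_hypercyclic w_le w_ge1 p_gt0 m_gt0).
  rewrite nneseriesS => [|n]; last by rewrite lee_fin invr_ge0 powR_ge0.
  by rewrite [X in (_ + X)%E]tail_div addey.
split=> // -[A [A_alg A_ne A_fhc]].
have [x Ax x_ne0] := lp_subalgebra_nonzero A_alg A_ne.
have [A_lp _ _ _ _] := A_alg.
apply: (not_fhc x (A_lp x Ax)); apply: A_fhc; last exact: exprn_seq_neq0.
exact: lp_subalgebra_exprn A_alg x m m_gt0 Ax.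
Qed.
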